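(* Let $A,B$ be nonempty persistence diagrams, $\Theta(c)=d_\infty(cA,B)$ for $c\ge0$, let $b^{(m)}\in\chi(B)$ and $a^{(m)}\in\chi(A)$ be points with largest $y$-coordinate within $\chi(B)$ and $\chi(A)$ respectively, and set $$c_B=\min\Big\{\frac{b^{(m)}_y+b^{(m)}_x}{2\,\mathrm{bd}(A)},\frac{\mathrm{pers}(B)}{\mathrm{pers}(A)}\Big\},\qquad c_A=\max\Big\{\frac{2\,\mathrm{bd}(B)}{a^{(m)}_x+a^{(m)}_y},\frac{\mathrm{pers}(B)}{\mathrm{pers}(A)}\Big\}.$$ Then $c_B\le c_A$; $\Theta(c)=\mathrm{pers}(B)$ for all $0\le c\le c_B$; $\Theta(c)=c\cdot\mathrm{pers}(A)$ for all $c\ge c_A$; and the minimum value $\overline{d_D}(A,B)$ of $\Theta$ on $[0,\infty)$ is attained at some $c\in[c_B,c_A]$.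
   Context: A persistence diagram is a finite multiset of points $a=(a_x,a_y)$ with $0\le a_x<a_y<\infty$ together with the diagonal $\Delta$ of infinite multiplicity; nonempty means it has at least one such point. $d_\infty$ is the bottleneck distance. $cA=\{(ca_x,ca_y)\}$ for $c>0$, $0A$ is the empty diagram. $\overline{d_D}(A,B)=\inf_{c\ge0}d_\infty(cA,B)$. $\mathrm{pers}(a)=(a_y-a_x)/2$; $\mathrm{pers}(A)=\max_{a\in A}\mathrm{pers}(a)$; $\chi(A)$ is the multiset of points of $A$ with persistence equal to $\mathrm{pers}(A)$; $\mathrm{bd}(A)=\max_{a\in A}a_y$. *)

From HB Require Import structures.
From mathcomp Require Import all_boot all_order all_algebra.
From mathcomp Require Import boolp classical_sets reals.
Unset Strict Implicit. Unset Printing Implicit Defensive.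
Import Order.TTheory GRing.Theory Num.Theory.
Local Open Scope ring_scope.

Section PD.
Context {R : realType}.

(* A persistence diagram: finite multiset (seq) of off-diagonal points
   (a_x, a_y) with 0 <= a_x < a_y; the diagonal is implicit. *)
Definition is_diagram (A : seq (R * R)) : Prop :=
  forall a, a \in A -> 0 <= a.1 /\ a.1 < a.2.

Definition pers_pt (a : R * R) : R := (a.2 - a.1) / 2.
Definition persD (A : seq (R * R)) : R := \big[Num.max/0]_(a <- A) pers_pt a.
Definition bd (A : seq (R * R)) : R := \big[Num.max/0]_(a <- A) a.2.

Definition linf (a b : R * R) : R := Num.max `|a.1 - b.1| `|a.2 - b.2|.

Definition scaleD (c : R) (A : seq (R * R)) : seq (R * R) :=
  if c == 0 then [::] else [seq (c * a.1, c * a.2) | a <- A].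

(* partial matchings between the points of A and B (unmatched points are
   matched to the diagonal) *)
Definition is_matching {n m : nat} (f : {ffun 'I_n -> option 'I_m}) : bool :=
  [forall i, forall j, ((f i != None) && (f i == f j)) ==> (i == j)].

Definition match_cost (A B : seq (R * R))
    (f : {ffun 'I_(size A) -> option 'I_(size B)}) : R :=
  Num.max
    (\big[Num.max/0]_(i < size A)
        match f i with
        | Some j => linf (nth (0, 0) A i) (nth (0, 0) B j)
        | None => pers_pt (nth (0, 0) A i)
        end)
    (\big[Num.max/0]_(j < size B | Some j \notin codom f)
        pers_pt (nth (0, 0) B j)).

(* bottleneck distance: minimum cost over all partial matchings
   (the empty matching is one of them, used as the initial value) *)
Definition bottleneck (A B : seq (R * R)) : R :=
  \big[Num.min/match_cost A B [ffun=> None]]_(f : {ffun 'I_(size A) -> option 'I_(size B)} | is_matching f)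
     match_cost A B f.

Definition Theta (A B : seq (R * R)) (c : R) : R := bottleneck (scaleD c A) B.

Definition dbarD (A B : seq (R * R)) : R :=
  inf [set Theta A B c | c in [set c : R | 0 <= c]].

End PD.

From HB Require Import structures.
From mathcomp Require Import all_boot all_order all_algebra.
From mathcomp Require Import boolp classical_sets reals.
From mathcomp Require Import topology normedtype derive.
From mathcomp Require Import ring lra.
Import Order.TTheory GRing.Theory Num.Theory numFieldNormedType.Exports.
Local Open Scope ring_scope.

(* The proof rests on three facts about the
   bottleneck distance between two diagrams X and Y.
   (1) Upper bound: matching nothing sends every point to the diagonal, so
       d_oo(X, Y) <= max (pers X) (pers Y); for X = cA this is
       Theta(c) <= max (c pers A) (pers B).
   (2) Lower bound: a point whose L-infinity distance to every point of the
       other diagram is at least its own persistence costs at least its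
       persistence in every matching.  For c <= c_B the point b^(m) is such a
       point (all of cA lies below its midpoint); for c >= c_A the point
       c a^(m) is (all of B lies below its midpoint).  With (1) this gives
       Theta = pers B on [0, c_B] and Theta = c pers A on [c_A, oo).
   (3) Stability: moving each point of X by at most e moves d_oo(X, Y) by at
       most e, so Theta is bd(A)-Lipschitz on (0, oo), hence continuous.
   The extreme value theorem gives a minimiser of Theta on [c_B, c_A]; as
   Theta is constant on [0, c_B] and increasing on [c_A, oo), it is a global
   minimiser, hence realises the infimum dbarD A B. *)

Section MaxMinDistance.
Variable R : realDomainType.

Lemma max_dist_le (x y x' y' e : R) : `|x - x'| <= e -> `|y - y'| <= e ->
  `|Num.max x y - Num.max x' y'| <= e.
Proof.
rewrite !ler_norml => /andP[? ?] /andP[? ?].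
by case: (leP x y); case: (leP x' y') => *; apply/andP; split; lra.
Qed.

Lemma min_dist_le (x y x' y' e : R) : `|x - x'| <= e -> `|y - y'| <= e ->
  `|Num.min x y - Num.min x' y'| <= e.
Proof.
rewrite !ler_norml => /andP[? ?] /andP[? ?].
by case: (leP x y); case: (leP x' y') => *; apply/andP; split; lra.
Qed.

Lemma bigmax_dist_le (I : Type) (r : seq I) (P : pred I) (F G : I -> R) x y e :
  `|x - y| <= e -> (forall i, P i -> `|F i - G i| <= e) ->
  `|\big[Num.max/x]_(i <- r | P i) F i - \big[Num.max/y]_(i <- r | P i) G i| <= e.
Proof.
by move=> xy FG; apply: (big_ind2 (fun a b => `|a - b| <= e)) => // *; exact: max_dist_le.
Qed.

Lemma bigmin_dist_le (I : Type) (r : seq I) (P : pred I) (F G : I -> R) x y e :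
  `|x - y| <= e -> (forall i, P i -> `|F i - G i| <= e) ->
  `|\big[Num.min/x]_(i <- r | P i) F i - \big[Num.min/y]_(i <- r | P i) G i| <= e.
Proof.
by move=> xy FG; apply: (big_ind2 (fun a b => `|a - b| <= e)) => // *; exact: min_dist_le.
Qed.

End MaxMinDistance.

Lemma lipschitz_continuous (R : realType) (f : R -> R) (k : R) :
  0 <= k -> (forall x y, `|f x - f y| <= k * `|x - y|) -> continuous f.
Proof.
move=> k0 fk x; apply/cvgrPdist_lt => e e0.
have d0 : 0 < e / (k + 1) by rewrite divr_gt0 //; lra.
apply/nbhs_ballP; exists (e / (k + 1)) => // t; rewrite /ball /= => xt.
apply: le_lt_trans (fk x t) _.
move: xt; rewrite ltr_pdivlMr; last lra.
have := normr_ge0 (x - t); nra.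
Qed.

Lemma inf_image_minimiser (R : realType) (T : Type) (S : set T) (f : T -> R) c0 :
  S c0 -> (forall c, S c -> f c0 <= f c) -> inf [set f c | c in S] = f c0.
Proof.
move=> Sc0 minf; apply/le_anti/andP; split.
  have hlb : has_lbound [set f c | c in S] by exists (f c0) => _ [c Sc <-]; exact: minf.
  by apply: (ge_inf hlb); exists c0.
by apply: lb_le_inf; [exists (f c0), c0 | move=> _ [c Sc <-]; exact: minf].
Qed.

Section Points.
Context {R : realType}.
Implicit Types a b x y : R * R.

Lemma linfC x y : linf x y = linf y x.
Proof. by rewrite /linf distrC [`|x.2 - _|]distrC. Qed.

Lemma pers_le_linf a b : b.2 <= (a.1 + a.2) / 2 -> pers_pt a <= linf a b.
Proof.
move=> below; rewrite /linf /pers_pt le_max; apply/orP; right.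
by rewrite ler_normr; apply/orP; left; lra.
Qed.

Lemma linf_dist_le x x' y : `|linf x y - linf x' y| <= linf x x'.
Proof.
have shift u u' v : u - v - (u' - v) = u - u' :> R by ring.
rewrite /linf; apply: max_dist_le; apply: le_trans (ler_dist_dist _ _) _;
  by rewrite shift le_max lexx ?orbT.
Qed.

Lemma pers_dist_le x x' : `|pers_pt x - pers_pt x'| <= linf x x'.
Proof.
have /ler_normlP[? ?] : `|x.1 - x'.1| <= linf x x' by rewrite le_max lexx.
have /ler_normlP[? ?] : `|x.2 - x'.2| <= linf x x' by rewrite le_max lexx orbT.
by rewrite /pers_pt; apply/ler_normlP; split; lra.
Qed.

Definition scale_pt (c : R) a : R * R := (c * a.1, c * a.2).

Lemma pers_scale c a : pers_pt (scale_pt c a) = c * pers_pt a.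
Proof. by rewrite /pers_pt /scale_pt /=; ring. Qed.

Lemma linf_scale_le c c' a : 0 <= a.1 -> a.1 <= a.2 ->
  linf (scale_pt c a) (scale_pt c' a) <= `|c - c'| * a.2.
Proof.
move=> a1 a12; rewrite /linf /scale_pt /= -!mulrBl !normrM (ger0_norm a1).
have a2 : 0 <= a.2 by lra.
by rewrite (ger0_norm a2) ge_max lexx andbT ler_wpM2l.
Qed.

Lemma persD_gt0 {X : seq (R * R)} {x : R * R} :
  is_diagram X -> x \in X -> 0 < persD X.
Proof.
move=> hX xX; have [_ x12] := hX x xX.
by apply: lt_le_trans (le_bigmax_seq _ _ _ _ xX erefl); rewrite /pers_pt; lra.
Qed.

Lemma bd_gt0 {X : seq (R * R)} {x : R * R} : is_diagram X -> x \in X -> 0 < bd X.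
Proof.
move=> hX xX; have [x1 x12] := hX x xX.
by apply: lt_le_trans (le_bigmax_seq _ _ _ _ xX erefl); lra.
Qed.

End Points.

Section Bottleneck.
Context {R : realType}.
Implicit Types X Y : seq (R * R).

(* The cost of a matching and the bottleneck distance, with the index ranges
   given explicitly: a diagram and its rescaling have equal but not
   convertible sizes, and must share the same matchings. *)
Definition match_cost_on {n m : nat} X Y (f : {ffun 'I_n -> option 'I_m}) : R :=
  Num.max
    (\big[Num.max/0]_(i < n)
        match f i with
        | Some j => linf (nth (0, 0) X i) (nth (0, 0) Y j)
        | None => pers_pt (nth (0, 0) X i)
        end)
    (\big[Num.max/0]_(j < m | Some j \notin codom f)
        pers_pt (nth (0, 0) Y j)).

Definition bottleneck_on (n m : nat) X Y : R :=
  \big[Num.min/@match_cost_on n m X Y [ffun=> None]]_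
    (f : {ffun 'I_n -> option 'I_m} | is_matching f) match_cost_on X Y f.

Lemma bottleneck_onE X Y : bottleneck X Y = bottleneck_on (size X) (size Y) X Y.
Proof. by []. Qed.

(* Upper bound: the empty matching sends every point to the diagonal. *)
Lemma bottleneck_le_pers X Y : bottleneck X Y <= Num.max (persD X) (persD Y).
Proof.
apply: le_trans (bigmin_le_id _ _ _ _) _; apply: le_max2.
- apply: bigmax_le => [|i _]; first exact: bigmax_ge_id.
  by rewrite ffunE; apply: le_bigmax_seq => //; exact: mem_nth.
- apply: bigmax_le => [|j _]; first exact: bigmax_ge_id.
  by apply: le_bigmax_seq => //; exact: mem_nth.
Qed.

Lemma match_cost_ge_pers_r n X Y (f : {ffun 'I_n -> option 'I_(size Y)}) y :
  y \in Y -> (forall i : 'I_n, pers_pt y <= linf (nth (0, 0) X i) y) ->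
  pers_pt y <= match_cost_on X Y f.
Proof.
move=> yY far; have j_lt : (index y Y < size Y)%N by rewrite index_mem.
pose j := Ordinal j_lt.
have nth_j : nth (0, 0) Y j = y by rewrite nth_index.
case: (boolP (Some j \in codom f)) => [/codomP[i fi]|unmatched].
- rewrite le_max; apply/orP; left; apply: le_trans (le_bigmax _ _ i).
  by rewrite -fi nth_j; exact: far.
- rewrite le_max; apply/orP; right; apply: (bigmax_sup j) => //.
  by rewrite nth_j.
Qed.

Lemma match_cost_ge_pers_l m X Y (f : {ffun 'I_(size X) -> option 'I_m}) x :
  x \in X -> (forall j : 'I_m, pers_pt x <= linf x (nth (0, 0) Y j)) ->
  pers_pt x <= match_cost_on X Y f.
Proof.
move=> xX far; have i_lt : (index x X < size X)%N by rewrite index_mem.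
pose i := Ordinal i_lt.
have nth_i : nth (0, 0) X i = x by rewrite nth_index.
rewrite le_max; apply/orP; left; apply: le_trans (le_bigmax _ _ i).
by rewrite nth_i; case: (f i) => [j|]; [exact: far | rewrite lexx].
Qed.

Lemma bottleneck_ge_pers_r X Y y :
  y \in Y -> (forall x, x \in X -> pers_pt y <= linf x y) ->
  pers_pt y <= bottleneck X Y.
Proof.
move=> yY far; rewrite bottleneck_onE.
by apply: le_bigmin => [|f _]; apply: match_cost_ge_pers_r => // i; apply/far/mem_nth.
Qed.

Lemma bottleneck_ge_pers_l X Y x :
  x \in X -> (forall y, y \in Y -> pers_pt x <= linf x y) ->
  pers_pt x <= bottleneck X Y.
Proof.
move=> xX far; rewrite bottleneck_onE.
by apply: le_bigmin => [|f _]; apply: match_cost_ge_pers_l => // j; apply/far/mem_nth.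
Qed.

Lemma bottleneck_on_stable n m X X' Y e : 0 <= e ->
  (forall i : 'I_n, linf (nth (0, 0) X i) (nth (0, 0) X' i) <= e) ->
  `|bottleneck_on n m X Y - bottleneck_on n m X' Y| <= e.
Proof.
move=> e0 close.
have cost_stable (f : {ffun 'I_n -> option 'I_m}) :
    `|match_cost_on X Y f - match_cost_on X' Y f| <= e.
  apply: max_dist_le; last by rewrite subrr normr0.
  apply: bigmax_dist_le => [|i _]; first by rewrite subrr normr0.
  case: (f i) => [j|]; apply: le_trans (close i).
  - exact: linf_dist_le.
  - exact: pers_dist_le.
by apply: bigmin_dist_le => [|f _]; exact: cost_stable.
Qed.

End Bottleneck.

Section Rescaling.
Context {R : realType}.
Variables A B : seq (R * R).

Lemma scaleD_mem c x : x \in scaleD c A -> exists2 a, a \in A & x = scale_pt c a.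
Proof. by rewrite /scaleD; case: eqP => // _ /mapP. Qed.

Lemma scale_pt_mem c a : c != 0 -> a \in A -> scale_pt c a \in scaleD c A.
Proof. by rewrite /scaleD => /negbTE -> aA; apply: map_f. Qed.

Lemma persD_scaleD_le c : 0 <= c -> persD (scaleD c A) <= c * persD A.
Proof.
move=> c0; rewrite /persD big_seq.
apply: bigmax_le => [|x /scaleD_mem[a aA ->]]; first by rewrite mulr_ge0 ?bigmax_ge_id.
by rewrite pers_scale ler_wpM2l //; apply: le_bigmax_seq.
Qed.

(* (1) for Theta: leaving everything unmatched. *)
Lemma Theta_le c : 0 <= c -> Theta A B c <= Num.max (c * persD A) (persD B).
Proof.
move=> c0; apply: le_trans (bottleneck_le_pers _ _) _.
by rewrite le_max2 ?persD_scaleD_le.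
Qed.

Lemma Theta_ge_pers_B c b : b \in B ->
  (forall a, a \in A -> c * a.2 <= (b.1 + b.2) / 2) -> pers_pt b <= Theta A B c.
Proof.
move=> bB below; apply: bottleneck_ge_pers_r => // _ /scaleD_mem[a aA ->].
by rewrite linfC; apply: pers_le_linf; exact: below.
Qed.

Lemma Theta_ge_pers_A c a : 0 < c -> a \in A ->
  (forall b, b \in B -> b.2 <= c * ((a.1 + a.2) / 2)) -> c * pers_pt a <= Theta A B c.
Proof.
move=> c0 aA below; rewrite -pers_scale.
apply: bottleneck_ge_pers_l => [|b bB]; first by rewrite scale_pt_mem ?gt_eqF.
by apply: pers_le_linf; rewrite /scale_pt /= -mulrDr -mulrA; exact: below.
Qed.

Definition Theta_on (c : R) : R :=
  bottleneck_on (size A) (size B) (map (scale_pt c) A) B.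

Lemma Theta_onE c : c != 0 -> Theta A B c = Theta_on c.
Proof. by move=> c0; rewrite /Theta /scaleD (negbTE c0) bottleneck_onE size_map. Qed.

Hypothesis hA : is_diagram A.

(* (3) for Theta: rescaling moves each point a by at most |c - c'| bd(A). *)
Lemma Theta_on_lipschitz c c' : `|Theta_on c - Theta_on c'| <= bd A * `|c - c'|.
Proof.
apply: bottleneck_on_stable => [|i]; first by rewrite mulr_ge0 ?bigmax_ge_id.
have aA : nth (0, 0) A i \in A by exact: mem_nth.
have [a1 a12] := hA _ aA; rewrite !(nth_map (0, 0)) //.
apply: le_trans (linf_scale_le _ _ _ a1 (ltW a12)) _.
by rewrite mulrC ler_wpM2r //; apply: le_bigmax_seq.
Qed.

Lemma Theta_on_continuous : continuous Theta_on.
Proof. exact: lipschitz_continuous (bigmax_ge_id _ _ _ _) Theta_on_lipschitz. Qed.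

End Rescaling.

Definition left_threshold {R : realType} (A B : seq (R * R)) (bm : R * R) : R :=
  Num.min ((bm.2 + bm.1) / (2 * bd A)) (persD B / persD A).

Definition right_threshold {R : realType} (A B : seq (R * R)) (am : R * R) : R :=
  Num.max ((2 * bd B) / (am.1 + am.2)) (persD B / persD A).

Section Thresholds.
Context {R : realType} {A B : seq (R * R)} {am bm : R * R}.
Hypotheses (hA : is_diagram A) (hB : is_diagram B).
Hypotheses (amA : am \in A) (am_chi : pers_pt am = persD A).
Hypotheses (bmB : bm \in B) (bm_chi : pers_pt bm = persD B).

Local Notation cB := (left_threshold A B bm).
Local Notation cA := (right_threshold A B am).

(* c_B > 0, so Theta is continuous near every point of [c_B, c_A]. *)
Lemma left_threshold_gt0 : 0 < cB.
Proof.
have [bm1 bm12] := hB _ bmB.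
have pA := persD_gt0 hA amA; have pB := persD_gt0 hB bmB; have bdA := bd_gt0 hA amA.
by rewrite lt_min !divr_gt0 //; lra.
Qed.

(* pers(B)/pers(A) lies between the two thresholds. *)
Lemma thresholds_le : cB <= cA.
Proof.
by apply: (@le_trans _ _ (persD B / persD A)); rewrite ?ge_min ?le_max lexx orbT.
Qed.

(* On [0, c_B] all of cA lies below the midpoint of bm, and
   c pers(A) <= pers(B). *)
Lemma Theta_left c : 0 <= c -> c <= cB -> Theta A B c = persD B.
Proof.
move=> c0 ccB; have pA := persD_gt0 hA amA; have bdA := bd_gt0 hA amA.
have [cbd cpers] : c <= (bm.2 + bm.1) / (2 * bd A) /\ c <= persD B / persD A.
  by move: ccB; rewrite le_min => /andP.
move: cbd cpers; rewrite !ler_pdivlMr ?mulr_gt0 // => cbd cpers.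
apply/le_anti/andP; split.
  by apply: le_trans (Theta_le _ _ _ c0) _; rewrite ge_max lexx andbT.
rewrite -bm_chi; apply: Theta_ge_pers_B => // a aA.
have a2 : a.2 <= bd A by apply: le_bigmax_seq.
by have := ler_wpM2l c0 a2; lra.
Qed.

(* On [c_A, oo) all of B lies below the midpoint of c am, and
   pers(B) <= c pers(A). *)
Lemma Theta_right c : cA <= c -> Theta A B c = c * persD A.
Proof.
move=> cAc; have [am1 am12] := hA _ amA; have pA := persD_gt0 hA amA.
have [cbd cpers] : 2 * bd B / (am.1 + am.2) <= c /\ persD B / persD A <= c.
  by move: cAc; rewrite ge_max => /andP.
move: cbd cpers; rewrite !ler_pdivrMr //; last lra; move=> cbd cpers.
have c0 : 0 < c by have := persD_gt0 hB bmB; nra.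
apply/le_anti/andP; split.
  by apply: le_trans (Theta_le _ _ _ (ltW c0)) _; rewrite ge_max lexx.
rewrite -am_chi; apply: Theta_ge_pers_A => // b bB.
have b2 : b.2 <= bd B by apply: le_bigmax_seq.
lra.
Qed.

(* A minimiser of Theta on [c_B, c_A] exists by continuity; it is a global
   minimiser since Theta is constant left of c_B and increasing right of c_A. *)
Lemma Theta_global_min :
  exists2 c0, cB <= c0 <= cA & forall c, 0 <= c -> Theta A B c0 <= Theta A B c.
Proof.
have cB0 := left_threshold_gt0; have cBcA := thresholds_le.
have cont : {within `[cB, cA], continuous Theta_on A B}%classic.
  by apply: continuous_subspaceT; exact: Theta_on_continuous.
have [c0 + c0_min] := EVT_min cBcA cont; rewrite in_itv /= => /andP[cBc0 c0cA].
have Theta_eq c : 0 < c -> Theta A B c = Theta_on A B c.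
  by move=> c_gt0; rewrite Theta_onE ?gt_eqF.
have c0_minTheta c : cB <= c <= cA -> Theta A B c0 <= Theta A B c.
  move=> cI; rewrite !Theta_eq ?(lt_le_trans cB0) //; last by case/andP: cI.
  by apply: c0_min; rewrite in_itv.
exists c0; first by rewrite cBc0.
move=> c c_ge0; case: (leP c cB) => [ccB|cBc].
  rewrite (Theta_left _ c_ge0 ccB) -(Theta_left _ (ltW cB0) (lexx cB)).
  by apply: c0_minTheta; rewrite lexx.
case: (leP cA c) => [cAc|ccA]; last by apply: c0_minTheta; rewrite !ltW.
apply: le_trans (c0_minTheta cA _) _; first by rewrite cBcA lexx.
rewrite !Theta_right ?lexx //.
by rewrite ler_wpM2r ?(ltW (persD_gt0 hA amA)).
Qed.

End Thresholds.

Theorem mainTheorem8 (R : realType) (A B : seq (R * R))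
  (hA : is_diagram A) (hB : is_diagram B)
  (neA : A != [::]) (neB : B != [::])
  (am bm : R * R)
  (amA : am \in A) (am_chi : pers_pt am = persD A)
  (am_max : forall a, a \in A -> pers_pt a = persD A -> a.2 <= am.2)
  (bmB : bm \in B) (bm_chi : pers_pt bm = persD B)
  (bm_max : forall b, b \in B -> pers_pt b = persD B -> b.2 <= bm.2) :
  let cB := Num.min ((bm.2 + bm.1) / (2 * bd A)) (persD B / persD A) in
  let cA := Num.max ((2 * bd B) / (am.1 + am.2)) (persD B / persD A) in
  [/\ cB <= cA,
      (forall c, 0 <= c -> c <= cB -> Theta A B c = persD B),
      (forall c, cA <= c -> Theta A B c = c * persD A) &
      exists2 c, cB <= c <= cA & Theta A B c = dbarD A B].
Proof.
move=> cB cA.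
have [c0 c0_range c0_min] := Theta_global_min hA hB amA am_chi bmB bm_chi.
split.
- exact: thresholds_le.
- exact: (Theta_left hA amA bmB bm_chi).
- exact: (Theta_right hA hB amA am_chi bmB).
- exists c0 => //; symmetry; apply: inf_image_minimiser => //=.
  have cB0 := left_threshold_gt0 hA hB amA bmB.
  by case/andP: c0_range => cBc0 _; apply: le_trans cBc0; exact: ltW.
Qed.
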